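(* Let $\mathbb{F}$ be a field, $0\neq h\in\mathbb{F}[x]$, $A_1$ the Weyl algebra and $A=A_h\subseteq A_1$ the unital subalgebra generated by $x$ and $\hat y=yh$. For $\alpha\in A_1$ let $F_\alpha:\mathbb{F}[x]\to A_1$ be the linear map with $F_\alpha(x^s)=\sum_{\ell=0}^{s-1}x^\ell\alpha x^{s-\ell-1}$ for $s\geq0$ (so $F_\alpha(1)=0$). Then for all $f,g\in\mathbb{F}[x]$: (a) $F_\alpha(fg)=fF_\alpha(g)+F_\alpha(f)g$; (b) if $\alpha$ commutes with $x$, then $F_\alpha(f)=\alpha f'$; (c) if $\alpha\in A$, then $F_\alpha(f)\in f'\alpha+[x,A]$.
   Context: $A_1$ is generated by $x,y$ with $yx-xy=1$. $[x,A]=\{xa-ax:a\in A\}$. $f'$ is the derivative of $f$. *)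

From HB Require Import structures.
From mathcomp Require Import all_boot all_order all_algebra.
Set Implicit Arguments. Unset Strict Implicit. Unset Printing Implicit Defensive.
Import GRing.Theory.
Local Open Scope ring_scope.

(* The first Weyl algebra over a field F is characterized (up to isomorphism)
   as an F-algebra R with elements x, y such that y x - x y = 1 and the
   monomials x^i y^j (i, j >= 0) form an F-basis of R (PBW basis). *)
Definition is_weyl (F : fieldType) (R : algType F) (x y : R) : Prop :=
  [/\ y * x - x * y = 1,
      (forall a : R, exists n (c : 'I_n -> 'I_n -> F),
          a = \sum_(i < n) \sum_(j < n) c i j *: (x ^+ i * y ^+ j)) &
      (forall n (c : 'I_n -> 'I_n -> F),
          \sum_(i < n) \sum_(j < n) c i j *: (x ^+ i * y ^+ j) = 0 ->
          forall i j, c i j = 0)].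

(* evaluation of f in F[x] at the element x of R (embedding F[x] into A_1) *)
Definition ev (F : fieldType) (R : algType F) (x : R) (f : {poly F}) : R :=
  horner_alg x f.

Inductive in_Ah (F : fieldType) (R : algType F) (x y : R) (h : {poly F}) : R -> Prop :=
  | Ah_one : in_Ah x y h 1
  | Ah_x : in_Ah x y h x
  | Ah_yhat : in_Ah x y h (y * ev x h)
  | Ah_add a b : in_Ah x y h a -> in_Ah x y h b -> in_Ah x y h (a + b)
  | Ah_scale (c : F) a : in_Ah x y h a -> in_Ah x y h (c *: a)
  | Ah_mul a b : in_Ah x y h a -> in_Ah x y h b -> in_Ah x y h (a * b).

Definition Fmap (F : fieldType) (R : algType F) (x alpha : R) (f : {poly F}) : R :=
  \sum_(s < size f) f`_s *: \sum_(l < s) x ^+ l * alpha * x ^+ (s - l - 1).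

(* F_alpha is the linear map with F_alpha(c) = 0 and F_alpha(f X) = x F_alpha(f) + alpha f,
   so all three parts follow by induction on f.  For (c) the key identity is
   [f, alpha] = [x, F_alpha(f)] (for f = x^s the sum defining [x, F_alpha(x^s)]
   telescopes), and F_alpha(f) lies in A whenever alpha does: if a witnesses (c)
   for f, then x a - F_alpha(f) witnesses it for f X + c. *)

From HB Require Import structures.
From mathcomp Require Import all_boot all_order all_algebra.
Import GRing.Theory.
Local Open Scope ring_scope.

Section Fmap.
Variables (F : fieldType) (R : algType F) (x : R).

Lemma ev0 : ev x 0 = 0.
Proof. exact: rmorph0. Qed.

Lemma evM (f g : {poly F}) : ev x (f * g) = ev x f * ev x g.
Proof. exact: rmorphM. Qed.

Lemma evMXaddC (f : {poly F}) (c : F) : ev x (f * 'X + c%:P) = ev x f * x + c%:A.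
Proof. by rewrite /ev rmorphD rmorphM /= horner_algX horner_algC. Qed.

Lemma comm_ev_x (f : {poly F}) : ev x f * x = x * ev x f.
Proof. by have := congr1 (ev x) (mulrC f 'X); rewrite !evM /ev horner_algX. Qed.

Lemma ev_derivMXaddC (f : {poly F}) (c : F) :
  ev x (f * 'X + c%:P)^`() = ev x f + x * ev x f^`().
Proof. by rewrite derivMXaddC /ev rmorphD rmorphM /= horner_algX -/(ev x _) comm_ev_x. Qed.

Definition Fmap_mon (alpha : R) (s : nat) : R :=
  \sum_(l < s) x ^+ l * alpha * x ^+ (s - l - 1).

Lemma Fmap_monS alpha s : Fmap_mon alpha s.+1 = alpha * x ^+ s + x * Fmap_mon alpha s.
Proof.
rewrite /Fmap_mon big_ord_recl expr0 mul1r subn0 subn1 /= mulr_sumr.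
by congr (_ + _); apply: eq_bigr => l _; rewrite /bump /= add1n subSS exprS !mulrA.
Qed.

Lemma Fmap_widen alpha {n} {f : {poly F}} : (size f <= n)%N ->
  Fmap x alpha f = \sum_(s < n) f`_s *: Fmap_mon alpha s.
Proof.
move=> le_f_n; rewrite /Fmap (big_ord_widen n (fun s => f`_s *: Fmap_mon alpha s)) //.
by rewrite big_mkcond; apply: eq_bigr => s _; case: ltnP => // /(nth_default 0) ->; rewrite scale0r.
Qed.

Lemma ev_widen {n} {f : {poly F}} : (size f <= n)%N ->
  ev x f = \sum_(s < n) f`_s *: x ^+ s.
Proof.
move=> le_f_n; rewrite /ev /horner_alg /horner_morph (@horner_coef_wide _ n).
  by apply: eq_bigr => s _; rewrite coef_map /= mulr_algl.
by rewrite (leq_trans (size_poly _ _)) // (leq_trans (size_map_poly_le _ _)).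
Qed.

Lemma FmapD alpha (f g : {poly F}) : Fmap x alpha (f + g) = Fmap x alpha f + Fmap x alpha g.
Proof.
set n := maxn (size f) (size g).
have le_fg_n : (size (f + g)%R <= n)%N by rewrite (leq_trans (size_polyD _ _)).
rewrite !(@Fmap_widen _ n) ?leq_maxl ?leq_maxr // -big_split.
by apply: eq_bigr => s _; rewrite coefD scalerDl.
Qed.

Lemma FmapZ alpha (c : F) (f : {poly F}) : Fmap x alpha (c *: f) = c *: Fmap x alpha f.
Proof.
rewrite (Fmap_widen _ (size_scale_leq c f)) (Fmap_widen _ (leqnn _)) scaler_sumr.
by apply: eq_bigr => s _; rewrite coefZ scalerA.
Qed.

Lemma FmapC alpha (c : F) : Fmap x alpha c%:P = 0.
Proof. by rewrite (@Fmap_widen _ 1) ?size_polyC ?leq_b1 // big_ord1 /Fmap_mon big_ord0 scaler0. Qed.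

Lemma Fmap0 alpha : Fmap x alpha 0 = 0.
Proof. by rewrite -polyC0 FmapC. Qed.

Lemma FmapMX alpha (f : {poly F}) :
  Fmap x alpha (f * 'X) = x * Fmap x alpha f + alpha * ev x f.
Proof.
have le_fX : (size (f * 'X)%R <= (size f).+1)%N.
  by rewrite (leq_trans (size_polyMleq _ _)) // size_polyX addn2.
rewrite (Fmap_widen _ le_fX) big_ord_recl coefMX scale0r add0r.
rewrite (Fmap_widen _ (leqnn _)) (ev_widen (leqnn _)) !mulr_sumr -big_split.
by apply: eq_bigr => s _; rewrite coefMX /= Fmap_monS scalerDr addrC -!scalerAr.
Qed.

Lemma FmapMXaddC alpha (f : {poly F}) (c : F) :
  Fmap x alpha (f * 'X + c%:P) = x * Fmap x alpha f + alpha * ev x f.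
Proof. by rewrite FmapD FmapC addr0 FmapMX. Qed.

Lemma FmapM alpha (f g : {poly F}) :
  Fmap x alpha (f * g) = ev x f * Fmap x alpha g + Fmap x alpha f * ev x g.
Proof.
elim/poly_ind: f => [|f c IHf]; first by rewrite mul0r Fmap0 ev0 !mul0r addr0.
rewrite mulrDl mulrAC mul_polyC FmapD FmapMX FmapZ IHf FmapMXaddC evMXaddC evM comm_ev_x.
rewrite !mulrDr !mulrDl !mulrA mulr_algl.
by rewrite -!addrA; congr (_ + _); rewrite [RHS]addrC addrA.
Qed.

Lemma Fmap_comm alpha (f : {poly F}) :
  alpha * x = x * alpha -> Fmap x alpha f = alpha * ev x f^`().
Proof.
move=> comm_alpha_x; elim/poly_ind: f => [|f c IHf]; first by rewrite deriv0 Fmap0 ev0 mulr0.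
rewrite FmapMXaddC IHf ev_derivMXaddC mulrA -comm_alpha_x -mulrA.
by rewrite mulrDr addrC.
Qed.

Lemma commutator_ev_Fmap alpha (f : {poly F}) :
  ev x f * alpha - alpha * ev x f = x * Fmap x alpha f - Fmap x alpha f * x.
Proof.
elim/poly_ind: f => [|f c IHf]; first by rewrite Fmap0 ev0 !mulr0 !mul0r subrr.
rewrite FmapMXaddC evMXaddC mulrDl mulrDr mulr_algl mulr_algr opprD addrACA subrr addr0.
rewrite mulrDr mulrDl opprD addrACA -[x * _ * x]mulrA -mulrBr -IHf mulrBr.
by rewrite addrA subrK !mulrA comm_ev_x.
Qed.

End Fmap.

Section Subalgebra.
Variables (F : fieldType) (R : algType F) (x y : R) (h : {poly F}).

Lemma Ah0 : in_Ah x y h 0.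
Proof. by rewrite -(scale0r 1); apply/Ah_scale/Ah_one. Qed.

Lemma AhB a b : in_Ah x y h a -> in_Ah x y h b -> in_Ah x y h (a - b).
Proof. by move=> Aa Ab; rewrite -scaleN1r; apply/Ah_add/Ah_scale. Qed.

Lemma Ah_ev (f : {poly F}) : in_Ah x y h (ev x f).
Proof.
elim/poly_ind: f => [|f c Af]; first by rewrite ev0; exact: Ah0.
by rewrite evMXaddC; apply/Ah_add/Ah_scale/Ah_one; apply/Ah_mul/Ah_x.
Qed.

Lemma Ah_Fmap alpha (f : {poly F}) : in_Ah x y h alpha -> in_Ah x y h (Fmap x alpha f).
Proof.
move=> Aalpha; elim/poly_ind: f => [|f c Af]; first by rewrite Fmap0; exact: Ah0.
by rewrite FmapMXaddC; apply/Ah_add/Ah_mul/Ah_ev; [apply/Ah_mul/Af/Ah_x | ].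
Qed.

Lemma Fmap_Ah alpha (f : {poly F}) : in_Ah x y h alpha ->
  exists2 a, in_Ah x y h a & Fmap x alpha f = ev x f^`() * alpha + (x * a - a * x).
Proof.
move=> Aalpha; elim/poly_ind: f => [|f c [a Aa IHf]].
  by exists 0; [exact: Ah0 | rewrite Fmap0 deriv0 ev0 !mul0r mulr0 subrr addr0].
exists (x * a - Fmap x alpha f); first by apply/AhB/Ah_Fmap; [apply/Ah_mul/Aa/Ah_x |].
rewrite FmapMXaddC [in LHS]IHf ev_derivMXaddC.
set P := Fmap x alpha f; set e := ev x f.
have -> : x * (x * a - P) - (x * a - P) * x = x * (x * a - a * x) - (e * alpha - alpha * e).
  by rewrite commutator_ev_Fmap mulrBr mulrBl [in RHS]mulrBr !mulrA !opprD addrACA.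
rewrite mulrDl mulrDr !mulrA opprB [alpha * e - _]addrC -!addrA.
by rewrite !(addrCA (e * alpha)) addKr.
Qed.

End Subalgebra.

Theorem lemma3p2 (F : fieldType) (R : algType F) (x y : R)
  (hW : is_weyl x y) (h : {poly F}) (hnz : h != 0) (alpha : R) :
  forall f g : {poly F},
  [/\ Fmap x alpha (f * g) = ev x f * Fmap x alpha g + Fmap x alpha f * ev x g,
      (alpha * x = x * alpha -> Fmap x alpha f = alpha * ev x f^`()) &
      (in_Ah x y h alpha ->
         exists2 a, in_Ah x y h a & Fmap x alpha f = ev x f^`() * alpha + (x * a - a * x))].
Proof.
move=> f g; split; [exact: FmapM | exact: Fmap_comm | exact: Fmap_Ah].
Qed.
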